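(* Let $\phi_1,\phi_2\colon\mathbb{R}\to[0,\infty)$ be continuous probability density functions such that $I_1=\{x:\phi_1(x)>0\}=(a_1,b_1)$ and $I_2=\{y:\phi_2(y)>0\}=(a_2,b_2)$ are bounded open intervals, with $a_1=0$. Let $F_1,F_2$ be the corresponding cumulative distribution functions, and define $K\colon[a_1,b_1]\to[a_2,b_2]$ by $K(x)=F_2^{-1}(F_1(x))$, where $F_2^{-1}$ is the inverse of the continuous strictly increasing bijection $F_2\colon[a_2,b_2]\to[0,1]$. Let $q\colon\mathbb{R}\to[0,\infty)$ be uniformly continuous and Lebesgue integrable, and set $$V=\int_{I_1} x\,\frac{\phi_1(x)}{\phi_2(K(x))}\,q(K(x))\,dx .$$ For $n\ge 1$ and $k=0,1,\dots,n$ let $x^{(n)}_k\in[a_1,b_1]$ be the point with $F_1(x^{(n)}_k)=k/n$ (so $x^{(n)}_0=a_1$, $x^{(n)}_n=b_1$, and $\int_{x^{(n)}_k}^{x^{(n)}_{k+1}}\phi_1=1/n$), let $y^{(n)}_k=K(x^{(n)}_k)$, and define $$V_n=\sum_{k=0}^{n-1}\frac{x^{(n)}_{k+1}+x^{(n)}_k}{2}\int_{y^{(n)}_k}^{y^{(n)}_{k+1}}q(s)\,ds .$$ Then $V_n\to V$ as $n\to\infty$.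
   Context: Financial interpretation (not needed for the claim): $\phi_1$ is the density of a one-step cash flow at horizon $T$, $\phi_2$ the density of the terminal value $S(T)$ of a traded benchmark security, $q$ the state price density of $S(T)$ (the second strike-derivative of the call price function), $V$ the value of the continuous portfolio of Arrow–Debreu securities replicating the cash flow distribution, and $V_n$ the value of the finite portfolio of cash-or-nothing calls approximating it. *)

From HB Require Import structures.
From mathcomp Require Import all_boot all_order all_algebra.
From mathcomp Require Import all_classical all_reals all_analysis.
Set Implicit Arguments. Unset Strict Implicit. Unset Printing Implicit Defensive.
Import Order.TTheory GRing.Theory Num.Theory.
Import numFieldNormedType.Exports.
Local Open Scope classical_set_scope.
Local Open Scope ring_scope.

Definition dens_cdf (R : realType) (phi : R -> R) (x : R) : R :=
  fine (\int[@lebesgue_measure R]_(t in `]-oo, x]) (phi t)%:E)%E.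

Definition cont_density (R : realType) (phi : R -> R) : Prop :=
  [/\ continuous phi, (forall x, 0 <= phi x) &
      (\int[@lebesgue_measure R]_x (phi x)%:E = 1)%E].

From HB Require Import structures.
From mathcomp Require Import all_boot all_order all_algebra.
From mathcomp Require Import all_classical all_reals all_analysis.
From mathcomp Require Import measurable_realfun lra.
Import Order.TTheory GRing.Theory Num.Theory.
Import numFieldNormedType.Exports.
Local Open Scope classical_set_scope.
Local Open Scope ring_scope.
Set Implicit Arguments. Unset Strict Implicit. Unset Printing Implicit Defensive.

(* Write g := (phi1 / phi2 o K) * (q o K) and H := Q o K, with Q the primitive of q.
   By the inverse function rule K' = phi1 / phi2 o K on (a1, b1), so H' = g there, and
   although g may blow up at the ends of the support, monotone convergence still gives
   \int_(c, d) g = H d - H c = \int_[K c, K d] q.  On a cell (x_k, x_(k+1)) of the quantile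
   grid the integral of x g(x) therefore lies between x_k and x_(k+1) times
   \int_[y_k, y_(k+1)] q, so it differs from the k-th term of V_n by at most half the cell
   width times that integral.  Summing, |V - V_n| <= mesh_n / 2 * \int_[a2, b2] q, and the
   mesh tends to 0 because the inverse of F1 is uniformly continuous. *)

Section dens_cdf_calculus.
Context {R : realType}.
Notation mu := (@lebesgue_measure R).
Variable f : R -> R.
Hypotheses (cf : continuous f) (intf : mu.-integrable setT (EFin \o f)).

Lemma is_derive_dens_cdf x : is_derive x (1 : R) (dens_cdf f) (f x).
Proof.
have xx1 : x < x + 1 by rewrite ltrDl.
have [||dF F'] := @continuous_FTC1 R f (BInfty _ true) x (x + 1) xx1 _ _ (@cf x).
- exact: integrableS intf.
- by rewrite ltNyr.
by rewrite -F' derive1E; exact: derivableP.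
Qed.

Lemma continuous_dens_cdf : continuous (dens_cdf f).
Proof.
move=> x; have [dF _] := is_derive_dens_cdf x.
exact/differentiable_continuous/derivable1_diffP.
Qed.

Lemma le_dens_cdf : (forall x, 0 <= f x) ->
  {homo dens_cdf f : x y / x <= y}.
Proof.
move=> f0 x y; rewrite le_eqVlt => /predU1P[->//|xy]; rewrite -subr_ge0.
have [c _ ->] := @MVT R (dens_cdf f) f x y xy
  (fun z _ => is_derive_dens_cdf z) (continuous_subspaceT continuous_dens_cdf).
by rewrite mulr_ge0// subr_ge0 ltW.
Qed.

Lemma Rintegral_itvcc_dens_cdf y z : y <= z ->
  Rintegral mu `[y, z] f = dens_cdf f z - dens_cdf f y.
Proof.
move=> yz; rewrite /dens_cdf -!/(Rintegral mu _ f).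
rewrite (@Rintegral_itvB R f (BInfty _ true) (BRight z) y) //.
- by rewrite Rintegral_itv_obnd_cbnd//; exact: integrableS intf.
- exact: integrableS intf.
Qed.

End dens_cdf_calculus.

Section real_functions.
Context {R : realType}.

Lemma is_derive1_comp (f g : R -> R) x df dg :
  is_derive x (1 : R) f df -> is_derive (f x) (1 : R) g dg ->
  is_derive x (1 : R) (g \o f) (dg * df).
Proof.
move=> hf hg; have [df1 _] := hf; have [dg1 _] := hg.
have d : derivable (g \o f) x 1.
  by apply/derivable1_diffP; apply: differentiable_comp; exact/derivable1_diffP.
apply: is_derive_eq (derivableP d) _.
have := derive1_comp df1 dg1; rewrite !derive1E => ->.
by rewrite (@derive_val _ _ _ _ _ _ _ hf) (@derive_val _ _ _ _ _ _ _ hg).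
Qed.

Lemma unif_continuous_continuous (f : R -> R) : unif_continuous f -> continuous f.
Proof.
move=> /unif_continuousP uf x; apply/cvgrPdist_lt => e e0.
have [d d0 h] := uf e e0.
by exists d => // y /= xy; exact: (h (x, y)).
Qed.

End real_functions.

Section ge0_FTC2_itvoo.
Context {R : realType}.
Notation mu := (@lebesgue_measure R).
Variables (g : R -> R) (c d : R).
Hypotheses (cg : {in `]c, d[, continuous g})
  (g0 : {in `]c, d[, forall x, 0 <= g x}).

Lemma ge0_integral_itvoo_shrink (u : nat -> R) :
  (forall n, 0 < u n) -> {homo u : m n / (m <= n)%N >-> n <= m} ->
  u n @[n --> \oo] --> 0 ->
  (\int[mu]_(x in `[(c + u n)%R, (d - u n)%R]) (g x)%:E)%E @[n --> \oo] -->
  (\int[mu]_(x in `]c, d[) (g x)%:E)%E.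
Proof.
move=> u0 u_dec u_cvg.
pose S n := `[c + u n, d - u n]%classic.
have SD n : S n `<=` `]c, d[%classic.
  move=> x; rewrite /S /= !in_itv /= => /andP[cx xd].
  by rewrite (lt_le_trans _ cx) ?(le_lt_trans xd) ?ltrDl ?gtrBl.
pose h n := (EFin \o g) \_ (S n).
have mD : measurable `]c, d[%classic by exact: measurable_itv.
have mg : measurable_fun `]c, d[ (EFin \o g).
  apply/measurable_EFinP; apply: subspace_continuous_measurable_fun => //.
  by apply: continuous_in_subspaceT => x; rewrite inE; exact: cg.
have mh n : measurable_fun `]c, d[ (h n).
  apply: (measurable_restrict _ (measurable_itv `[c + u n, d - u n]) mD).1.
  by apply: measurable_funS mg => //; exact: subIsetl.
have h0 n x : `]c, d[%classic x -> (0 <= h n x)%E.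
  by move=> xD; rewrite /h /patch; case: ifPn => // _; rewrite lee_fin g0.
have h_nd x : `]c, d[%classic x -> {homo h^~ x : m n / (m <= n)%N >-> (m <= n)%E}.
  move=> xD m n mn; rewrite /h /patch; case: ifPn => [|_]; last first.
    by case: ifPn => // _; rewrite lee_fin g0.
  rewrite inE /S /= in_itv /= => /andP[cx xd].
  by rewrite ifT// inE /= in_itv /= (le_trans _ cx) ?(le_trans xd) ?lerD2l ?lerN2 ?u_dec.
have -> : (\int[mu]_(x in `]c, d[) (g x)%:E)%E =
    (\int[mu]_(x in `]c, d[) limn (h^~ x))%E.
  apply: eq_integral => x; rewrite inE /= in_itv /= => /andP[cx xd].
  suff hx : \forall n \near \oo, h n x = (g x)%:E by rewrite (lim_near_cst _ hx).
  have m0 : 0 < Num.min (x - c) (d - x) by rewrite lt_min !subr_gt0 cx xd.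
  near=> n; have : u n <= Num.min (x - c) (d - x).
    by near: n; exact: (@cvgr_le _ _ _ _ u 0 u_cvg _ m0).
  rewrite le_min => /andP[uxc udx]; rewrite /h /patch ifT// inE /S /= in_itv /=.
  by rewrite -lerBrDl uxc lerBrDl -lerBrDr udx.
rewrite (_ : (fun n => _) = fun n => \int[mu]_(x in `]c, d[) h n x)%E.
  exact: cvg_monotone_convergence.
by apply/funext => n; rewrite /h -integral_mkcondr setIidr.
Unshelve. all: by end_near. Qed.

Lemma LRcontinuous_cvg_shrink (G : R -> R) (u : nat -> R) :
  G x @[x --> c^'+] --> G c -> G x @[x --> d^'-] --> G d ->
  (forall n, 0 < u n) -> u n @[n --> \oo] --> 0 ->
  G (d - u n) - G (c + u n) @[n --> \oo] --> G d - G c.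
Proof.
move=> Gc Gd u0 u_cvg; apply: cvgB.
- apply: (cvg_at_leftP G d (G d)).1 Gd (fun n => d - u n) _; split.
  + by move=> n; rewrite gtrBl.
  + by rewrite -[X in _ --> X]subr0; apply: cvgB => //; exact: cvg_cst.
- apply: (cvg_at_rightP G c (G c)).1 Gc (fun n => c + u n) _; split.
  + by move=> n; rewrite ltrDl.
  + by rewrite -[X in _ --> X]addr0; apply: cvgD => //; exact: cvg_cst.
Qed.

Lemma ge0_continuous_FTC2oo (G : R -> R) : c < d ->
  derivable_oo_LRcontinuous G c d -> {in `]c, d[, (G^`())%classic =1 g} ->
  (\int[mu]_(x in `]c, d[) (g x)%:E = (G d - G c)%:E)%E.
Proof.
move=> cd [dG Gc Gd] G'g.
pose u n := (d - c) / 3 / n.+1%:R.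
have u0 n : 0 < u n by rewrite !divr_gt0 ?subr_gt0.
have u_dec : {homo u : m n / (m <= n)%N >-> n <= m}.
  by move=> m n mn; rewrite ler_pM2l ?divr_gt0 ?subr_gt0// lef_pV2 ?posrE// ler_nat.
have u_cvg : u n @[n --> \oo] --> 0.
  by rewrite -(mulr0 ((d - c) / 3)); apply: cvgM; [exact: cvg_cst | exact: cvg_harmonic].
have uI n x : c + u n <= x <= d - u n -> x \in `]c, d[.
  move=> /andP[cx xd]; rewrite in_itv /=.
  by rewrite (lt_le_trans _ cx) ?(le_lt_trans xd) ?ltrDl ?gtrBl.
have Gcont x : x \in `]c, d[ -> {for x, continuous G}.
  by move=> /dG /derivable1_diffP /differentiable_continuous.
have FTC2_shrunk n : (\int[mu]_(x in `[(c + u n)%R, (d - u n)%R]) (g x)%:E =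
    (G (d - u n) - G (c + u n))%:E)%E.
  have u_small : c + u n < d - u n.
    have : u n <= (d - c) / 3.
      by rewrite /u ler_pdivrMr ?ltr0n// ler_peMr ?ler1n// divr_ge0// subr_ge0 ltW.
    have := u0 n; lra.
  rewrite EFinB; apply: continuous_FTC2 => //.
  - apply: continuous_in_subspaceT => x; rewrite inE /= in_itv /= => xI.
    exact: cg (uI _ _ xI).
  - split.
    + by move=> x; rewrite in_itv /= => /andP[? ?]; apply/dG/(uI n); rewrite !ltW.
    + by apply/cvg_at_right_filter/Gcont/(uI n); rewrite lexx ltW.
    + by apply/cvg_at_left_filter/Gcont/(uI n); rewrite lexx ltW.
  - by move=> x; rewrite in_itv /= => /andP[? ?]; apply/G'g/(uI n); rewrite !ltW.
have := ge0_integral_itvoo_shrink u0 u_dec u_cvg.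
under eq_fun do rewrite FTC2_shrunk.
move=> /cvg_unique; apply; first exact: ereal_hausdorff.
by apply: cvg_EFin; [exact: nearW | exact: LRcontinuous_cvg_shrink].
Qed.

End ge0_FTC2_itvoo.

Section integral_itv_lemmas.
Context {R : realType}.
Notation mu := (@lebesgue_measure R).

Lemma ge0_integral_itvoc_partition (h : R -> \bar R) (t : nat -> R) (m : nat) :
  (forall k, (k < m)%N -> t k <= t k.+1) ->
  measurable_fun `]t 0%N, t m] h -> (forall x, `]t 0%N, t m]%classic x -> (0 <= h x)%E) ->
  (\int[mu]_(x in `]t 0%N, t m]) h x =
   \sum_(k < m) \int[mu]_(x in `]t k, t k.+1]) h x)%E.
Proof.
move=> t_nd mh h0.
have t_le j i : (i <= j)%N -> (j <= m)%N -> t i <= t j.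
  elim: j i => [|j IH] i ij jm; first by move: ij; rewrite leqn0 => /eqP->.
  move: ij; rewrite leq_eqVlt => /orP[/eqP->//|ij].
  exact: le_trans (IH i ij (ltnW jm)) (t_nd j jm).
suff : forall j, (j <= m)%N -> (\int[mu]_(x in `]t 0%N, t j]) h x =
   \sum_(k < j) \int[mu]_(x in `]t k, t k.+1]) h x)%E by apply.
elim => [|j IH] jm; first by rewrite set_itvoc0 integral_set0 big_ord0.
rewrite big_ord_recr /= -IH ?(ltnW jm)//.
have sub : `]t 0%N, t j.+1] `<=` `]t 0%N, t m]%classic.
  by apply: subset_itvl; rewrite bnd_simp t_le.
have -> : `]t 0%N, t j.+1]%classic = `]t 0%N, t j] `|` `]t j, t j.+1].
  by rewrite -itv_bndbnd_setU// bnd_simp ?t_le ?t_nd// ltnW.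
rewrite ge0_integral_setU//.
- by apply: measurable_funS mh => //; rewrite -itv_bndbnd_setU ?bnd_simp ?t_le ?t_nd// ltnW.
- move=> x xI; apply/h0/sub.
  by move: xI; rewrite -itv_bndbnd_setU ?bnd_simp ?t_le ?t_nd// ltnW.
- rewrite disj_set2E; apply/eqP/seteqP; split => // x [].
  by rewrite /= !in_itv /= => /andP[_ xj] /andP[jx _]; have := le_lt_trans xj jx; rewrite ltxx.
Qed.

Lemma ge0_integral_itvoo_mul_id_bounds (g : R -> R) (c d I : R) : 0 <= c -> c <= d ->
  {in `]c, d[, forall x, 0 <= g x} -> measurable_fun `]c, d[ g ->
  (\int[mu]_(x in `]c, d[) (g x)%:E)%E = I%:E ->
  ((c * I)%:E <= \int[mu]_(x in `]c, d[) (x * g x)%:E <= (d * I)%:E)%E.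
Proof.
move=> c0 cd g0 mg gI.
have cst_eq k : 0 <= k -> (k * I)%:E = (\int[mu]_(x in `]c, d[) (k * g x)%:E)%E.
  by move=> k0; rewrite EFinM -gI -ge0_integralZl_EFin//; exact/measurable_EFinP.
have g0' x : c < x < d -> 0 <= g x by move=> xI; apply: g0; rewrite in_itv.
apply/andP; split; rewrite cst_eq ?(le_trans c0)//; apply: ge0_le_integral => //.
- by move=> x /= /g0' gx0; rewrite lee_fin mulr_ge0.
- by apply/measurable_EFinP; exact: measurable_funM.
- by apply/measurable_EFinP; exact: measurable_funM.
- by move=> x /= /[dup] /g0' gx0 /andP[cx _]; rewrite lee_fin ler_wpM2r// ltW.
- move=> x /= /[dup] /g0' gx0 /andP[cx _].
  by rewrite lee_fin mulr_ge0// (le_trans c0 (ltW cx)).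
- by apply/measurable_EFinP; exact: measurable_funM.
- by apply/measurable_EFinP; exact: measurable_funM.
- by move=> x /= /[dup] /g0' gx0 /andP[_ xd]; rewrite lee_fin ler_wpM2r// ltW.
Qed.

End integral_itv_lemmas.

Section cont_density_facts.
Context {R : realType}.
Notation mu := (@lebesgue_measure R).
Variable phi : R -> R.
Hypothesis dphi : cont_density phi.

Lemma cont_density_ge0 x : 0 <= phi x. Proof. by case: dphi. Qed.

Lemma cont_density_continuous : continuous phi. Proof. by case: dphi. Qed.

Lemma cont_density_integrable : mu.-integrable setT (EFin \o phi).
Proof.
apply/integrableP; split.
  by apply/measurable_EFinP; exact: continuous_measurable_fun cont_density_continuous.
under eq_integral do rewrite /= ger0_norm ?cont_density_ge0//.
by case: dphi => _ _ ->; rewrite ltry.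
Qed.

Lemma is_derive_cont_density_cdf x : is_derive x (1 : R) (dens_cdf phi) (phi x).
Proof. exact: is_derive_dens_cdf cont_density_continuous cont_density_integrable x. Qed.

Lemma continuous_cont_density_cdf : continuous (dens_cdf phi).
Proof. exact: continuous_dens_cdf cont_density_continuous cont_density_integrable. Qed.

Lemma le_cont_density_cdf : {homo dens_cdf phi : x y / x <= y}.
Proof.
exact: le_dens_cdf cont_density_continuous cont_density_integrable cont_density_ge0.
Qed.

End cont_density_facts.

Section density_support.
Context {R : realType}.
Notation mu := (@lebesgue_measure R).
Variables (phi : R -> R) (a b : R).
Hypotheses (dphi : cont_density phi) (supp : [set x | 0 < phi x] = `]a, b[%classic).
Local Notation F := (dens_cdf phi).

Lemma density_support_gt0 x : a < x < b -> 0 < phi x.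
Proof.
move=> xab; have : `]a, b[%classic x by rewrite /= in_itv.
by rewrite -supp.
Qed.

Lemma density_support_eq0 x : ~ (a < x < b) -> phi x = 0.
Proof.
move=> xab; apply/eqP; rewrite eq_le cont_density_ge0// andbT leNgt; apply/negP => px.
by have : [set x | 0 < phi x] x by []; rewrite supp /= in_itv.
Qed.

Lemma density_support_lt : a < b.
Proof.
rewrite ltNge; apply/negP => ba.
suff : (\int[mu]_x (phi x)%:E = 0)%E by case: dphi => _ _ -> /eqP; rewrite eqe oner_eq0.
rewrite (eq_integral (fun _ => 0%E)) ?integral0// => x _.
by rewrite density_support_eq0// => /andP[ax xb]; move: (lt_trans ax xb); rewrite ltNge ba.
Qed.

Lemma dens_cdf_support_left x : x <= a -> F x = 0.
Proof.
move=> xa; rewrite /dens_cdf (eq_integral (fun _ => 0%E)) ?integral0//.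
move=> t; rewrite inE /= in_itv /= => tx.
rewrite density_support_eq0// => /andP[atx _].
by move: (le_lt_trans xa atx); rewrite ltNge tx.
Qed.

Lemma dens_cdf_support_right x : b <= x -> F x = 1.
Proof.
move=> bx; rewrite /dens_cdf integral_mkcond -[X in _ = X]/(fine 1%E).
case: dphi => _ _ <-; congr fine; apply: eq_integral => t _.
rewrite /patch; case: ifPn => //; rewrite notin_setE /= in_itv /= => /negP.
rewrite -ltNge => xt.
rewrite density_support_eq0// => /andP[_ tb].
by move: (le_lt_trans bx xt); rewrite ltNge (ltW tb).
Qed.

Lemma dens_cdf_support_ltr x y : a <= x -> x < y -> y <= b -> F x < F y.
Proof.
move=> ax xy yb; rewrite -subr_gt0.
have [c cxy ->] := @MVT R F phi x y xy (fun z _ => is_derive_cont_density_cdf dphi z)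
  (continuous_subspaceT (continuous_cont_density_cdf dphi)).
rewrite mulr_gt0 ?subr_gt0//; apply: density_support_gt0.
move: cxy; rewrite in_itv /= => /andP[xc cy].
by rewrite (le_lt_trans ax xc) (lt_le_trans cy yb).
Qed.

Lemma dens_cdf_support_inj y z : a <= y <= b -> a <= z <= b -> F y = F z -> y = z.
Proof.
move=> /andP[ay yb] /andP[az zb] Fyz.
have [yz|zy|//] := ltgtP y z.
- by have := dens_cdf_support_ltr ay yz zb; rewrite Fyz ltxx.
- by have := dens_cdf_support_ltr az zy yb; rewrite Fyz ltxx.
Qed.

Lemma dens_cdf_support_inv_unif_continuous (e : R) : 0 < e -> exists2 eta : R, 0 < eta &
  forall x y, a <= x -> x <= y -> y <= b -> F y - F x < eta -> y - x < e.
Proof.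
move=> e0; have [bae|eba] := ltP (b - a) e.
  by exists 1 => // x y ax xy yb _; lra.
pose gain t := F (t + e) - F t.
have cgain : continuous gain.
  move=> t; apply: cvgB; last exact: continuous_cont_density_cdf.
  apply: (@cvg_comp _ _ _ (fun t => t + e) F); last exact: continuous_cont_density_cdf.
  by apply: cvgD; [exact: cvg_id | exact: cvg_cst].
have [c cI cmin] := @EVT_min R gain a (b - e) (ltac:(lra)) (continuous_subspaceT cgain).
move: cI; rewrite in_itv /= => /andP[ac cb].
exists (gain c); first by rewrite subr_gt0 dens_cdf_support_ltr ?ltrDl//; lra.
move=> x y ax xy yb; apply: contraTT; rewrite -!leNgt => exy.
have xI : x \in `[a, b - e] by rewrite in_itv /=; apply/andP; split; lra.
have Fxe : F (x + e) <= F y by apply: (le_cont_density_cdf dphi); lra.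
by have := cmin x xI; rewrite /gain; lra.
Qed.

End density_support.

Section transport_map.
Context {R : realType}.
Variables (phi1 phi2 K : R -> R) (a1 b1 a2 b2 : R).
Hypotheses (dphi1 : cont_density phi1) (dphi2 : cont_density phi2)
  (supp1 : [set x | 0 < phi1 x] = `]a1, b1[%classic)
  (supp2 : [set y | 0 < phi2 y] = `]a2, b2[%classic)
  (hK : forall x, a1 <= x <= b1 ->
     a2 <= K x <= b2 /\ dens_cdf phi2 (K x) = dens_cdf phi1 x).
Local Notation F1 := (dens_cdf phi1).
Local Notation F2 := (dens_cdf phi2).

Let a1b1 : a1 < b1. Proof. exact: density_support_lt dphi1 supp1. Qed.
Let a2b2 : a2 < b2. Proof. exact: density_support_lt dphi2 supp2. Qed.

Lemma transport_ltr x y : a1 <= x -> x < y -> y <= b1 -> K x < K y.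
Proof.
move=> a1x xy yb1.
have /hK[_ FKx] : a1 <= x <= b1 by rewrite a1x (ltW (lt_le_trans xy yb1)).
have /hK[_ FKy] : a1 <= y <= b1 by rewrite yb1 (le_trans a1x (ltW xy)).
rewrite ltNge; apply/negP => /(le_cont_density_cdf dphi2).
by rewrite FKx FKy leNgt (dens_cdf_support_ltr dphi1 supp1).
Qed.

Lemma transport_left : K a1 = a2.
Proof.
have /hK[Ka1 FKa1] : a1 <= a1 <= b1 by rewrite lexx ltW.
apply: (dens_cdf_support_inj dphi2 supp2) => //; first by rewrite lexx ltW.
by rewrite FKa1 (dens_cdf_support_left dphi1 supp1) ?(dens_cdf_support_left dphi2 supp2).
Qed.

Lemma transport_right : K b1 = b2.
Proof.
have /hK[Kb1 FKb1] : a1 <= b1 <= b1 by rewrite lexx ltW.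
apply: (dens_cdf_support_inj dphi2 supp2) => //; first by rewrite lexx ltW.
by rewrite FKb1 (dens_cdf_support_right dphi1 supp1) ?(dens_cdf_support_right dphi2 supp2).
Qed.

Lemma transport_itvoo x : a1 < x < b1 -> a2 < K x < b2.
Proof.
move=> /andP[a1x xb1]; rewrite -{1}transport_left -transport_right.
by rewrite !transport_ltr ?lexx// ltW.
Qed.

Lemma transport_within_continuous : {within `[a1, b1], continuous K}.
Proof.
apply: segment_inc_surj_continuous.
  move=> x y; rewrite !in_itv /= => /andP[a1x xb1] /andP[a1y yb1].
  have [xy|yx|->] := ltgtP x y; last by rewrite !lexx.
  - by rewrite (ltW (transport_ltr a1x xy yb1)).
  - by rewrite leNgt (transport_ltr a1y yx xb1).
move=> y /=; rewrite in_itv /= transport_left transport_right => /andP[a2y yb2].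
have F2y : Num.min (F1 a1) (F1 b1) <= F2 y <= Num.max (F1 a1) (F1 b1).
  rewrite (dens_cdf_support_left dphi1 supp1) ?(dens_cdf_support_right dphi1 supp1)//.
  rewrite min_l ?max_r ?ler01//.
  rewrite -(dens_cdf_support_left dphi2 supp2 (lexx a2)).
  rewrite -(dens_cdf_support_right dphi2 supp2 (lexx b2)).
  by rewrite !(le_cont_density_cdf dphi2).
have [c cI F1c] := @IVT R F1 a1 b1 (F2 y) (ltW a1b1)
  (continuous_subspaceT (continuous_cont_density_cdf dphi1)) F2y.
exists c => //; move: cI; rewrite in_itv /= => cI; have [KcI FKc] := hK cI.
by apply: (dens_cdf_support_inj dphi2 supp2) => //; rewrite ?a2y ?yb2// FKc.
Qed.

Lemma transport_continuous_itvoo : {in `]a1, b1[, continuous K}.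
Proof. by have [] := (continuous_within_itvP _ a1b1).1 transport_within_continuous. Qed.

Lemma transport_cvg_left : K x @[x --> a1^'+] --> K a1.
Proof. by have [] := (continuous_within_itvP _ a1b1).1 transport_within_continuous. Qed.

Lemma transport_cvg_right : K x @[x --> b1^'-] --> K b1.
Proof. by have [] := (continuous_within_itvP _ a1b1).1 transport_within_continuous. Qed.

Lemma is_derive_transport x : a1 < x < b1 ->
  is_derive x (1 : R) K (phi1 x / phi2 (K x)).
Proof.
move=> xI; have KxI := transport_itvoo xI.
have /hK[_ FKx] : a1 <= x <= b1 by case/andP: xI => *; rewrite !ltW.
pose F2inv s := xget a2 [set y | a2 <= y <= b2 /\ F2 y = s].
have F2invK y : a2 <= y <= b2 -> F2inv (F2 y) = y.
  move=> yI; have [zI Fzy] :=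
    @xgetI _ a2 [set z | a2 <= z <= b2 /\ F2 z = F2 y] y (conj yI erefl).
  exact: (dens_cdf_support_inj dphi2 supp2 zI yI Fzy).
have F2inv' : is_derive (F1 x) (1 : R) F2inv (phi2 (K x))^-1.
  rewrite -FKx; apply: is_derive_inverse.
  - have : K x \in `]a2, b2[ by rewrite in_itv.
    move=> /near_in_itvoo; apply: filterS => y; rewrite in_itv /= => /andP[a2y yb2].
    by rewrite F2invK// !ltW.
  - by near=> y; exact: continuous_cont_density_cdf.
  - exact: is_derive_cont_density_cdf.
  - by rewrite gt_eqF// (density_support_gt0 supp2).
have := is_derive1_comp (is_derive_cont_density_cdf dphi1 x) F2inv'.
rewrite mulrC => /near_eq_is_derive; apply.
have : x \in `]a1, b1[ by rewrite in_itv.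
move=> /near_in_itvoo; apply: filterS => z; rewrite in_itv /= => /andP[a1z zb1].
have /hK[KzI FKz] : a1 <= z <= b1 by rewrite !ltW.
by rewrite /= -FKz F2invK.
Unshelve. all: by end_near. Qed.

End transport_map.

Section transport_weight.
Context {R : realType}.
Notation mu := (@lebesgue_measure R).
Variables (phi1 phi2 K q : R -> R) (a1 b1 a2 b2 : R).
Hypotheses (dphi1 : cont_density phi1) (dphi2 : cont_density phi2)
  (supp1 : [set x | 0 < phi1 x] = `]a1, b1[%classic)
  (supp2 : [set y | 0 < phi2 y] = `]a2, b2[%classic)
  (hK : forall x, a1 <= x <= b1 ->
     a2 <= K x <= b2 /\ dens_cdf phi2 (K x) = dens_cdf phi1 x)
  (q0 : forall s, 0 <= q s) (cq : continuous q)
  (qi : mu.-integrable setT (EFin \o q)).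

Definition transport_weight x := phi1 x / phi2 (K x) * q (K x).

Definition transport_primitive x := dens_cdf q (K x).

Local Notation g := transport_weight.
Local Notation H := transport_primitive.

Lemma transport_weight_ge0 x : 0 <= g x.
Proof.
by rewrite mulr_ge0 ?divr_ge0 ?(cont_density_ge0 dphi1) ?(cont_density_ge0 dphi2).
Qed.

Lemma transport_weight_continuous x : a1 < x < b1 -> {for x, continuous g}.
Proof.
move=> xI; have cK : {for x, continuous K}.
  by apply: (transport_continuous_itvoo dphi1 dphi2 supp1 supp2 hK); rewrite in_itv.
rewrite /transport_weight; have cqK : {for K x, continuous q} by exact: cq.
have cphi2K : {for K x, continuous phi2} by exact: cont_density_continuous.
apply: continuousM; last exact: continuous_comp cK cqK.
apply: continuousM; first exact: cont_density_continuous.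
apply: continuousV; last exact: continuous_comp cK cphi2K.
by rewrite gt_eqF// (density_support_gt0 supp2)// (transport_itvoo dphi1 dphi2 supp1 supp2 hK).
Qed.

Lemma is_derive_transport_primitive x : a1 < x < b1 -> is_derive x (1 : R) H (g x).
Proof.
move=> xI; rewrite /g mulrC.
exact: is_derive1_comp (is_derive_transport dphi1 dphi2 supp1 supp2 hK xI)
  (is_derive_dens_cdf cq qi _).
Qed.

Lemma transport_primitive_LRcontinuous c d : a1 <= c -> c < d -> d <= b1 ->
  derivable_oo_LRcontinuous H c d.
Proof.
move=> a1c cd db1; have cQ := continuous_dens_cdf cq qi.
have cK z : a1 < z < b1 -> {for z, continuous K}.
  by move=> zI; apply: (transport_continuous_itvoo dphi1 dphi2 supp1 supp2 hK); rewrite in_itv.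
split.
- move=> x; rewrite in_itv /= => /andP[cx xd].
  have [] // := @is_derive_transport_primitive x.
  by rewrite (le_lt_trans a1c cx) (lt_le_trans xd db1).
- have Kc : K x @[x --> c^'+] --> K c.
    move: a1c; rewrite le_eqVlt => /predU1P[<-|a1c].
      exact: (transport_cvg_left dphi1 dphi2 supp1 supp2 hK).
    by apply/cvg_at_right_filter/cK; rewrite a1c (lt_le_trans cd db1).
  exact: cvg_comp Kc (cQ (K c)).
- have Kd : K x @[x --> d^'-] --> K d.
    move: db1; rewrite le_eqVlt => /predU1P[->|db1].
      exact: (transport_cvg_right dphi1 dphi2 supp1 supp2 hK).
    by apply/cvg_at_left_filter/cK; rewrite db1 (le_lt_trans a1c cd).
  exact: cvg_comp Kd (cQ (K d)).
Qed.

Lemma integral_transport_weight c d : a1 <= c -> c < d -> d <= b1 ->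
  (\int[mu]_(x in `]c, d[) (g x)%:E = (H d - H c)%:E)%E.
Proof.
move=> a1c cd db1.
have xI x : x \in `]c, d[ -> a1 < x < b1.
  by rewrite in_itv /= => /andP[cx xd]; rewrite (le_lt_trans a1c cx) (lt_le_trans xd db1).
apply: ge0_continuous_FTC2oo => //.
- by move=> x /xI; exact: transport_weight_continuous.
- by move=> x _; exact: transport_weight_ge0.
- exact: transport_primitive_LRcontinuous.
- move=> x /xI /is_derive_transport_primitive dH.
  by rewrite derive1E; exact: derive_val.
Qed.

End transport_weight.

Section quantile_grid.
Context {R : realType}.
Variables (phi : R -> R) (a b : R) (xs : nat -> nat -> R).
Hypotheses (dphi : cont_density phi) (supp : [set x | 0 < phi x] = `]a, b[%classic)
  (hxs : forall n k, (0 < n)%N -> (k <= n)%N ->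
     a <= xs n k <= b /\ dens_cdf phi (xs n k) = k%:R / n%:R).

Lemma quantile_grid_ltr n k : (k < n)%N -> xs n k < xs n k.+1.
Proof.
move=> kn; have n0 : (0 < n)%N by apply: leq_ltn_trans kn.
have [_ Fk] := hxs n0 (ltnW kn); have [_ Fk1] := hxs n0 kn.
rewrite ltNge; apply/negP => /(le_cont_density_cdf dphi); rewrite Fk Fk1.
by rewrite ler_pM2r ?invr_gt0 ?ltr0n// ler_nat ltnn.
Qed.

Lemma quantile_grid_first n : (0 < n)%N -> xs n 0 = a.
Proof.
move=> n0; have [/andP[ax xb] F0] := hxs n0 (leq0n n).
apply/eqP; rewrite eq_le ax andbT leNgt; apply/negP => ax'.
have := dens_cdf_support_ltr dphi supp (lexx a) ax' xb.
by rewrite F0 (dens_cdf_support_left dphi supp (lexx a)) mul0r ltxx.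
Qed.

Lemma quantile_grid_last n : (0 < n)%N -> xs n n = b.
Proof.
move=> n0; have [/andP[ax xb] Fn] := hxs n0 (leqnn n).
apply/eqP; rewrite eq_le xb /= leNgt; apply/negP => xb'.
have := dens_cdf_support_ltr dphi supp ax xb' (lexx b).
by rewrite Fn (dens_cdf_support_right dphi supp (lexx b)) divff ?pnatr_eq0 -?lt0n// ltxx.
Qed.

Lemma quantile_grid_mesh (e : R) : 0 < e ->
  \forall n \near \oo, forall k, (k < n)%N -> xs n k.+1 - xs n k < e.
Proof.
move=> e0; have [eta eta0 small] := dens_cdf_support_inv_unif_continuous dphi supp e0.
near=> n => k kn; have n0 : (0 < n)%N by apply: leq_ltn_trans kn.
have [/andP[ak _] Fk] := hxs n0 (ltnW kn); have [/andP[_ bk1] Fk1] := hxs n0 kn.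
apply: small => //; first exact/ltW/quantile_grid_ltr.
rewrite Fk Fk1 -mulrBl -natrB// subSnn div1r -[eta]invrK.
rewrite ltf_pV2 ?posrE ?invr_gt0 ?ltr0n//.
by near: n; exact: nbhs_infty_gtr.
Unshelve. all: by end_near. Qed.

End quantile_grid.

Section transport_value.
Context {R : realType}.
Notation mu := (@lebesgue_measure R).
Variables (phi1 phi2 K q : R -> R) (a1 b1 a2 b2 : R) (xs : nat -> nat -> R).
Hypotheses (dphi1 : cont_density phi1) (dphi2 : cont_density phi2)
  (supp1 : [set x | 0 < phi1 x] = `]a1, b1[%classic)
  (supp2 : [set y | 0 < phi2 y] = `]a2, b2[%classic)
  (hK : forall x, a1 <= x <= b1 ->
     a2 <= K x <= b2 /\ dens_cdf phi2 (K x) = dens_cdf phi1 x)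
  (a1_ge0 : 0 <= a1)
  (q0 : forall s, 0 <= q s) (cq : continuous q)
  (qi : mu.-integrable setT (EFin \o q))
  (hxs : forall n k, (0 < n)%N -> (k <= n)%N ->
     a1 <= xs n k <= b1 /\ dens_cdf phi1 (xs n k) = k%:R / n%:R).

Local Notation g := (transport_weight phi1 phi2 K q).
Local Notation H := (transport_primitive K q).
Local Notation moment c d := (Rintegral mu `]c, d[ (fun x => x * g x)).

Let measurable_weight c d : a1 <= c -> d <= b1 -> measurable_fun `]c, d[ g.
Proof.
move=> a1c db1; apply: subspace_continuous_measurable_fun => //.
apply: continuous_in_subspaceT => x; rewrite inE /= in_itv /= => /andP[cx xd].
apply: (transport_weight_continuous dphi1 dphi2 supp1 supp2 hK cq).
by rewrite (le_lt_trans a1c cx) (lt_le_trans xd db1).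
Qed.

Lemma transport_moment_bounds c d : a1 <= c -> c < d -> d <= b1 ->
  (\int[mu]_(x in `]c, d[) (x * g x)%:E)%E = (moment c d)%:E /\
  c * (H d - H c) <= moment c d <= d * (H d - H c).
Proof.
move=> a1c cd db1.
have /andP[lo hi] := ge0_integral_itvoo_mul_id_bounds (le_trans a1_ge0 a1c) (ltW cd)
  (fun x _ => transport_weight_ge0 K dphi1 dphi2 q0 x) (measurable_weight a1c db1)
  (integral_transport_weight dphi1 dphi2 supp1 supp2 hK q0 cq qi a1c cd db1).
have fin : (\int[mu]_(x in `]c, d[) (x * g x)%:E)%E = (moment c d)%:E.
  by rewrite fineK// fin_numElt (lt_le_trans _ lo) ?(le_lt_trans hi) ?ltNyr ?ltry.
by split=> //; rewrite -!lee_fin -fin lo hi.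
Qed.

Lemma transport_moment_partition n : (0 < n)%N ->
  (\int[mu]_(x in `]a1, b1[) (x * g x)%:E)%E =
  (\sum_(k < n) moment (xs n k) (xs n k.+1))%:E.
Proof.
move=> n0; have xs_ltr := quantile_grid_ltr dphi1 hxs.
have xs_ge x k : (k <= n)%N -> xs n k <= x -> 0 <= x.
  by move=> kn; apply/le_trans/(le_trans a1_ge0); case/andP: (hxs n0 kn).1.
have mxg c d : a1 <= c -> d <= b1 -> measurable_fun `]c, d[ (fun x => (x * g x)%:E).
  by move=> a1c db1; apply/measurable_EFinP/measurable_funM => //; exact: measurable_weight.
rewrite integral_itv_bndo_bndc; last exact: mxg.
have xs0 := quantile_grid_first dphi1 supp1 hxs n0.
have xsn := quantile_grid_last dphi1 supp1 hxs n0.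
rewrite -{1}xs0 -xsn.
rewrite ge0_integral_itvoc_partition.
- rewrite -sumEFin; apply: eq_bigr => k _; have kn := ltn_ord k.
  have [/andP[a1k _] _] := hxs n0 (ltnW kn); have [/andP[_ kb1] _] := hxs n0 kn.
  rewrite -integral_itv_bndo_bndc; last exact: mxg.
  by have [] := transport_moment_bounds a1k (xs_ltr _ _ kn) kb1.
- by move=> j jn; apply: ltW; exact: xs_ltr.
- by rewrite xs0 xsn; apply/emeasurable_fun_itv_bndo_bndcP; exact: mxg.
- move=> x; rewrite /= in_itv /= => /andP[x0x _].
  by rewrite lee_fin mulr_ge0 ?(transport_weight_ge0 K dphi1 dphi2 q0)// (xs_ge x 0%N) ?ltW.
Qed.

Lemma transport_moment_midpoint_error c d : a1 <= c -> c < d -> d <= b1 ->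
  `|moment c d - (d + c) / 2 * Rintegral mu `[K c, K d] q| <=
  (d - c) / 2 * (H d - H c).
Proof.
move=> a1c cd db1; have [_ /andP[lo hi]] := transport_moment_bounds a1c cd db1.
rewrite Rintegral_itvcc_dens_cdf//; last first.
  exact: ltW (transport_ltr dphi1 dphi2 supp1 hK a1c cd db1).
rewrite ler_norml; apply/andP; split; rewrite /transport_primitive in lo hi *; lra.
Qed.

Lemma transport_value_cvg :
  (fun n => (\sum_(k < n) ((xs n k.+1 + xs n k) / 2 *
     Rintegral mu `[K (xs n k), K (xs n k.+1)] q))%:E) @ \oo -->
  (\int[mu]_(x in `]a1, b1[) (x * g x)%:E)%E.
Proof.
have a1b1 := density_support_lt dphi1 supp1.
have [-> _] := transport_moment_bounds (lexx a1) a1b1 (lexx b1).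
apply: cvg_EFin; first exact: nearW.
apply/cvgrPdist_le => e e0.
have H_nd x y : a1 <= x -> x < y -> y <= b1 -> H x <= H y.
  move=> a1x xy yb1; apply: (le_dens_cdf cq qi q0).
  exact: ltW (transport_ltr dphi1 dphi2 supp1 hK a1x xy yb1).
pose eps := e / (H b1 - H a1 + 1).
have eps0 : 0 < eps by rewrite divr_gt0// ltr_wpDl// subr_ge0 H_nd.
near=> n.
have mesh : forall k, (k < n)%N -> xs n k.+1 - xs n k < eps.
  by near: n; rewrite nbhs_filterE; have := quantile_grid_mesh dphi1 supp1 hxs eps0; apply.
have n0 : (0 < n)%N by near: n; exact: nbhs_infty_gt.
rewrite /=.
have -> : moment a1 b1 = \sum_(k < n) moment (xs n k) (xs n k.+1).
  apply: EFin_inj; rewrite -transport_moment_partition//.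
  by have [] := transport_moment_bounds (lexx a1) a1b1 (lexx b1).
rewrite -sumrB; apply: le_trans (ler_norm_sum _ _ _) _.
apply: (@le_trans _ _ (\sum_(k < n) eps * (H (xs n k.+1) - H (xs n k)))).
  apply: ler_sum => k _; have kn := ltn_ord k.
  have [/andP[a1k _] _] := hxs n0 (ltnW kn); have [/andP[_ kb1] _] := hxs n0 kn.
  have xs_ltr := quantile_grid_ltr dphi1 hxs kn.
  apply: le_trans (transport_moment_midpoint_error a1k xs_ltr kb1) _.
  rewrite ler_wpM2r ?subr_ge0 ?H_nd//.
  by have := mesh k kn; lra.
rewrite -mulr_sumr.
rewrite -(big_mkord xpredT (fun k => H (xs n k.+1) - H (xs n k))) telescope_sumr//.
rewrite (quantile_grid_first dphi1 supp1 hxs n0) (quantile_grid_last dphi1 supp1 hxs n0).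
rewrite /eps mulrAC ler_pdivrMr.
  by rewrite ler_pM2l// lerDl.
by rewrite ltr_wpDl// subr_ge0 H_nd.
Unshelve. all: by end_near. Qed.

End transport_value.

Unset Implicit Arguments.
Set Strict Implicit.

Theorem mainTheorem1 (R : realType) (phi1 phi2 q : R -> R) (a1 b1 a2 b2 : R)
  (K : R -> R) (xs : nat -> nat -> R) :
  cont_density phi1 -> cont_density phi2 ->
  [set x | 0 < phi1 x] = `]a1, b1[%classic ->
  [set y | 0 < phi2 y] = `]a2, b2[%classic ->
  a1 = 0 ->
  (* K = F2^{-1} o F1 on [a1, b1] *)
  (forall x, a1 <= x <= b1 -> a2 <= K x <= b2 /\ dens_cdf phi2 (K x) = dens_cdf phi1 x) ->
  (forall s, 0 <= q s) ->
  unif_continuous q ->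
  (@lebesgue_measure R).-integrable setT (fun s => (q s)%:E) ->
  (* x^(n)_k in [a1,b1] with F1(x^(n)_k) = k/n *)
  (forall n k, (0 < n)%N -> (k <= n)%N ->
     a1 <= xs n k <= b1 /\ dens_cdf phi1 (xs n k) = k%:R / n%:R) ->
  let V := (\int[@lebesgue_measure R]_(x in `]a1, b1[)
              (x * phi1 x / phi2 (K x) * q (K x))%:E)%E in
  let Vn := fun n : nat =>
    \sum_(k < n) ((xs n k.+1 + xs n k) / 2 *
       Rintegral (@lebesgue_measure R) `[K (xs n k), K (xs n k.+1)] q) in
  (fun n => (Vn n)%:E) @ \oo --> V.

Proof.
move=> dphi1 dphi2 supp1 supp2 a10 hK q0 qu qi hxs V Vn.
have a1_ge0 : 0 <= a1 by rewrite a10.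
have -> : V = (\int[@lebesgue_measure R]_(x in `]a1, b1[)
    (x * transport_weight phi1 phi2 K q x)%:E)%E.
  by apply: eq_integral => x _; rewrite /transport_weight !mulrA.
exact: transport_value_cvg dphi1 dphi2 supp1 supp2 hK a1_ge0 q0
  (unif_continuous_continuous qu) qi hxs.
Qed.
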